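(* Fix bidder $i$, $v_{-i}$ and $\Delta>0$. Let $x^*,x$ be allocation rules such that $k\mapsto x^*_i(z_{i,k},v_{-i})$ and $k\mapsto x_i(z_{i,k},v_{-i})$ are non-decreasing and $|x^*_i(z_{i,j},v_{-i})-x_i(z_{i,j},v_{-i})|\le\Delta$ for all $j$. Let $p^*_i=\sqrt{q^*_i}$ and $p_i=\sqrt{q_i}$ where $q^*_i,q_i$ are given by the payment formula $q_i(z_{i,\ell},v_{-i})=z_{i,\ell}x_i(z_{i,\ell},v_{-i})-\sum_{j=1}^{\ell-1}(z_{i,j+1}-z_{i,j})x_i(z_{i,j},v_{-i})$ (likewise for $x^*$). Then $$\Big|\sum_{k=1}^{K_i}f_{i,k}\big(p^*_i(z_{i,k},v_{-i})-p_i(z_{i,k},v_{-i})\big)\Big|\le\sqrt{2\Delta\,(2z_{i,K_i}-z_{i,1})},$$ in particular it is $O(\sqrt{\Delta})$.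
   Context: Bidder $i$'s type space is $V_i=\{z_{i,1}<\dots<z_{i,K_i}\}\subset[0,\infty)$ with pmf $f_{i,k}$; allocations lie in $[0,1]$. (Under monotonicity the payment-formula values are nonnegative, so the square roots are defined.) *)

From Stdlib Require Import Reals.
Open Scope R_scope.

Fixpoint sum1 (g : nat -> R) (n : nat) : R :=
  match n with
  | O => 0
  | S m => sum1 g m + g (S m)
  end.

(* Payment formula (for fixed bidder i and fixed v_{-i}); types indexed 1..K:
   q(z_l) = z_l x(z_l) - sum_{j=1}^{l-1} (z_{j+1} - z_j) x(z_j). *)
Definition payment (z x : nat -> R) (l : nat) : R :=
  z l * x l - sum1 (fun j => (z (S j) - z j) * x j) (l - 1).

(* Payments are linear in the allocation rule, so p* - p is the payment of the
   difference x* - x, which Abel summation bounds by Delta (2 z_l - z_1).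
   Since |sqrt a - sqrt b| <= sqrt |a - b|, each term of the f-weighted average
   is at most sqrt (Delta (2 z_K - z_1)).  With Rocq's [sqrt] (zero on negative
   reals) this inequality holds for all reals. *)
From Stdlib Require Import Reals Lra Lia.
Open Scope R_scope.

Lemma sqrt_sub_le_sqrt_sub a b : 0 <= b <= a -> sqrt a - sqrt b <= sqrt (a - b).
Proof.
  intros [hb hab].
  pose proof (sqrt_le_1_alt b a hab).
  pose proof (sqrt_pos b).
  pose proof (sqrt_sqrt a ltac:(lra)). pose proof (sqrt_sqrt b hb).
  rewrite <- (sqrt_square (sqrt a - sqrt b)) by lra.
  apply sqrt_le_1_alt. nra.
Qed.

Lemma Rabs_sqrt_sub_le a b : Rabs (sqrt a - sqrt b) <= sqrt (Rabs (a - b)).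
Proof.
  assert (Hle : forall a b, b <= a -> Rabs (sqrt a - sqrt b) <= sqrt (Rabs (a - b))).
  { clear a b. intros a b hab.
    pose proof (sqrt_le_1_alt b a hab).
    rewrite (Rabs_right (a - b)), Rabs_right by lra.
    destruct (Rle_dec 0 b) as [hb | hb].
    - apply sqrt_sub_le_sqrt_sub; lra.
    - rewrite (sqrt_neg_0 b), Rminus_0_r by lra.
      apply sqrt_le_1_alt; lra. }
  destruct (Rle_dec b a).
  - now apply Hle.
  - rewrite Rabs_minus_sym, (Rabs_minus_sym a). apply Hle; lra.
Qed.

Lemma sum1_ext g h n :
  (forall j, (1 <= j <= n)%nat -> g j = h j) -> sum1 g n = sum1 h n.
Proof.
  induction n as [|n IH]; intros H; simpl; [reflexivity|].
  rewrite IH, H; [reflexivity | lia |].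
  intros j hj. apply H. lia.
Qed.

Lemma sum1_sub g h n : sum1 (fun j => g j - h j) n = sum1 g n - sum1 h n.
Proof. induction n; simpl; lra. Qed.

Lemma sum1_telescope z n : sum1 (fun j => z (S j) - z j) n = z (S n) - z 1%nat.
Proof. induction n as [|n IH]; simpl; [lra | rewrite IH; lra]. Qed.

Lemma Rabs_sum1_le_scaled g w c n :
  (forall j, (1 <= j <= n)%nat -> Rabs (g j) <= c * w j) ->
  Rabs (sum1 g n) <= c * sum1 w n.
Proof.
  induction n as [|n IH]; intros H; simpl.
  - rewrite Rabs_R0. lra.
  - eapply Rle_trans; [apply Rabs_triang|].
    pose proof (IH (fun j hj => H j ltac:(lia))).
    pose proof (H (S n) ltac:(lia)). lra.
Qed.

Lemma payment_sub z x y l :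
  payment z (fun j => x j - y j) l = payment z x l - payment z y l.
Proof.
  unfold payment.
  rewrite (sum1_ext _ (fun j => (z (S j) - z j) * x j - (z (S j) - z j) * y j))
    by (intros; ring).
  rewrite sum1_sub. ring.
Qed.

Section Increasing.

Variables (z : nat -> R) (K : nat).
Hypothesis hzinc : forall k, (1 <= k)%nat -> (k < K)%nat -> z k < z (S k).

Lemma increasing_le m n : (1 <= m <= n)%nat -> (n <= K)%nat -> z m <= z n.
Proof.
  intros hm hn. induction n as [|n IH]; [lia|].
  destruct (Nat.eq_dec m (S n)) as [-> | hne]; [lra|].
  pose proof (hzinc n ltac:(lia) ltac:(lia)). pose proof (IH ltac:(lia) ltac:(lia)). lra.
Qed.

Lemma Rabs_payment_le d Delta l :
  0 <= z 1%nat -> (1 <= l <= K)%nat ->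
  (forall j, (1 <= j <= l)%nat -> Rabs (d j) <= Delta) ->
  Rabs (payment z d l) <= Delta * (2 * z l - z 1%nat).
Proof.
  intros hz0 hl hd.
  pose proof (increasing_le 1 l ltac:(lia) ltac:(lia)) as hzl.
  assert (hsum : Rabs (sum1 (fun j => (z (S j) - z j) * d j) (l - 1))
                 <= Delta * (z l - z 1%nat)).
  { rewrite <- (Nat.succ_pred_pos l) at 2 by lia.
    rewrite <- Nat.sub_1_r, <- sum1_telescope.
    apply Rabs_sum1_le_scaled. intros j hj.
    pose proof (hzinc j ltac:(lia) ltac:(lia)).
    rewrite Rabs_mult, Rabs_right by lra.
    rewrite Rmult_comm. apply Rmult_le_compat_r; [lra | apply hd; lia]. }
  assert (hlast : Rabs (z l * d l) <= Delta * z l).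
  { rewrite Rabs_mult, Rabs_right, Rmult_comm by lra.
    apply Rmult_le_compat_r; [lra | apply hd; lia]. }
  unfold payment, Rminus at 1.
  eapply Rle_trans; [apply Rabs_triang|]. rewrite Rabs_Ropp. lra.
Qed.

End Increasing.

Theorem mainTheorem15
  (K : nat) (z f xs x : nat -> R) (Delta : R)
  (hK : (1 <= K)%nat)
  (hz0 : 0 <= z 1%nat)
  (hzinc : forall k, (1 <= k)%nat -> (k < K)%nat -> z k < z (S k))
  (hf0 : forall k, (1 <= k)%nat -> (k <= K)%nat -> 0 <= f k)
  (hf1 : sum1 f K = 1)
  (hxs01 : forall k, (1 <= k)%nat -> (k <= K)%nat -> 0 <= xs k <= 1)
  (hx01 : forall k, (1 <= k)%nat -> (k <= K)%nat -> 0 <= x k <= 1)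
  (hxsmon : forall k, (1 <= k)%nat -> (k < K)%nat -> xs k <= xs (S k))
  (hxmon : forall k, (1 <= k)%nat -> (k < K)%nat -> x k <= x (S k))
  (hDelta : 0 < Delta)
  (hclose : forall j, (1 <= j)%nat -> (j <= K)%nat -> Rabs (xs j - x j) <= Delta) :
  Rabs (sum1 (fun k => f k * (sqrt (payment z xs k) - sqrt (payment z x k))) K)
    <= sqrt (2 * Delta * (2 * z K - z 1%nat)).
Proof.
  set (B := Delta * (2 * z K - z 1%nat)).
  pose proof (increasing_le z K hzinc 1 K ltac:(lia) ltac:(lia)) as hz1K.
  assert (hpay : forall k, (1 <= k <= K)%nat ->
                 Rabs (payment z xs k - payment z x k) <= B).
  { intros k hk. rewrite <- payment_sub.
    eapply Rle_trans.
    - apply (Rabs_payment_le z K hzinc); [lra | lia | intros; apply hclose; lia].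
    - pose proof (increasing_le z K hzinc k K ltac:(lia) ltac:(lia)).
      unfold B. apply Rmult_le_compat_l; lra. }
  eapply Rle_trans.
  - apply (Rabs_sum1_le_scaled _ f (sqrt B)). intros k hk.
    rewrite Rabs_mult, Rabs_right, Rmult_comm by (apply Rle_ge, hf0; lia).
    apply Rmult_le_compat_r; [apply hf0; lia|].
    eapply Rle_trans; [apply Rabs_sqrt_sub_le | apply sqrt_le_1_alt, hpay; lia].
  - rewrite hf1, Rmult_1_r. apply sqrt_le_1_alt.
    assert (0 <= B) by (unfold B; apply Rmult_le_pos; lra).
    unfold B in *. lra.
Qed.
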